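(* For $n\ge1$ define the $\mathbb{K}$-linear endomorphism $P_{\mu,n}$ of $M(\mu)\otimes V_1^{\otimes n}$ by \[ P_{\mu,n}=\frac{F_{\mu,n-1}\,F_{\mu+1,n-2}\cdots F_{\mu+n-2,1}\,F_{\mu+n-1}\;E_{\mu+n-1}\,E_{\mu+n-2,1}\cdots E_{\mu+1,n-2}\,E_{\mu,n-1}}{[\mu+n][\mu+n-1]\cdots[\mu+1]} \] (so $P_{\mu,1}=F_\mu E_\mu/[\mu+1]$). Then $P_{\mu,n}$ is a $U_q(\mathfrak{sl}_2)$-module endomorphism of $M(\mu)\otimes V_1^{\otimes n}$ satisfying $P_{\mu,n}^2=P_{\mu,n}$, and, for $n\ge2$ and every $i=1,\dots,n-1$, \[ \varepsilon_i\circ P_{\mu,n}=0,\qquad P_{\mu,n}\circ\eta_i=0, \] where $\varepsilon_i=\mathrm{Id}_{M(\mu)}\otimes\mathrm{Id}_{V_1}^{\otimes(i-1)}\otimes\varepsilon\otimes\mathrm{Id}_{V_1}^{\otimes(n-i-1)}: M(\mu)\otimes V_1^{\otimes n}\to M(\mu)\otimes V_1^{\otimes(n-2)}$ and $\eta_i=\mathrm{Id}_{M(\mu)}\otimes\mathrm{Id}_{V_1}^{\otimes(i-1)}\otimes\eta\otimes\mathrm{Id}_{V_1}^{\otimes(n-i-1)}: M(\mu)\otimes V_1^{\otimes (n-2)}\to M(\mu)\otimes V_1^{\otimes n}$ (acting on the $i$-th and $(i+1)$-st tensor factors $V_1$).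
   Context: Let $\mathbb{K}=\mathbb{C}(q,q^{\mu})$, where $q$ and $q^{\mu}$ are algebraically independent indeterminates; $[a]=\frac{q^{a}-q^{-a}}{q-q^{-1}}$ (so $[\mu+k]\neq0$ for integers $k$). $U_q(\mathfrak{sl}_2)$ is generated by $K^{\pm1},E,F$ with $KK^{-1}=K^{-1}K=1$, $KE=q^2EK$, $KF=q^{-2}FK$, $EF-FE=\frac{K-K^{-1}}{q-q^{-1}}$ and coproduct $\Delta(K^{\pm1})=K^{\pm1}\otimes K^{\pm1}$, $\Delta(F)=F\otimes1+K^{-1}\otimes F$, $\Delta(E)=E\otimes K+1\otimes E$; tensor products of modules carry the induced action. $V_1$ is the 2-dimensional module with basis $v_0,v_1$: $Kv_0=qv_0$, $Kv_1=q^{-1}v_1$, $Ev_0=0$, $Ev_1=v_0$, $Fv_0=v_1$, $Fv_1=0$. For $\lambda=\mu+k$ ($k\in\mathbb{Z}$), the Verma module $M(\lambda)$ has $\mathbb{K}$-basis $v_0,v_1,\dots$ with $Kv_i=q^{\lambda-2i}v_i$, $Ev_i=[i]v_{i-1}$, $Fv_i=[\lambda-i]v_{i+1}$, $v_{-1}=0$. For each such $\lambda$, the module maps $E_\lambda: M(\lambda)\otimes V_1\to M(\lambda+1)$ and $F_\lambda: M(\lambda+1)\to M(\lambda)\otimes V_1$ are defined by $E_\lambda(v_i\otimes v_0)=q^iv_i$, $E_\lambda(v_i\otimes v_1)=v_{i+1}$, $F_\lambda(v_i)=[\lambda+1-i]\,v_i\otimes v_0+q^{i-\lambda-1}[i]\,v_{i-1}\otimes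 v_1$. For $j\ge0$, $E_{\lambda,j}=E_\lambda\otimes\mathrm{Id}_{V_1}^{\otimes j}$ and $F_{\lambda,j}=F_\lambda\otimes\mathrm{Id}_{V_1}^{\otimes j}$ (with $E_{\lambda,0}=E_\lambda$, $F_{\lambda,0}=F_\lambda$); compositions are read right to left. The module maps $\varepsilon: V_1\otimes V_1\to\mathbb{K}$ and $\eta:\mathbb{K}\to V_1\otimes V_1$ are given by $\varepsilon(v_0\otimes v_0)=\varepsilon(v_1\otimes v_1)=0$, $\varepsilon(v_0\otimes v_1)=-q$, $\varepsilon(v_1\otimes v_0)=1$, and $\eta(1)=v_0\otimes v_1-q^{-1}v_1\otimes v_0$; tensoring with $\mathbb{K}$ is identified with the identity. *)

(* Concrete field K = C(q, q^mu) realised as the fraction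
   field of C[X_0, X_1] with q := X_0, q^mu := X_1, C := complex numbers
   (complex Rdefinitions.R, R = Stdlib reals). *)
From mathcomp Require Import all_boot all_algebra.
From mathcomp Require Import complex Rstruct.
From mathcomp Require Import mpoly fraction.

Set Implicit Arguments.
Unset Strict Implicit.
Unset Printing Implicit Defensive.

Import GRing.Theory.
Local Open Scope ring_scope.

Definition Cfield : fieldType := complex Rdefinitions.R.
Definition Kfield : fieldType := {fraction {mpoly Cfield[2]}}.
Definition qK : Kfield := tofrac ('X_(0 : 'I_2) : {mpoly Cfield[2]}).
Definition qmuK : Kfield := tofrac ('X_(1 : 'I_2) : {mpoly Cfield[2]}).

Section Generic.
Variables (K : fieldType) (q Q : K).   (* Q stands for q^mu *)

(* quantum integers: [n] for an integer n, and [mu + k] *)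
Definition qint (n : int) : K := (q ^ n - q ^ (- n)) / (q - q^-1).
Definition qmu (k : int) : K := (Q * q ^ k - (Q * q ^ k)^-1) / (q - q^-1).

(* The space M(lambda) (x) V_1^{(x) n}: the basis vector
   v_i (x) v_{w_1} (x) ... (x) v_{w_n}  (w_j = false means v_0, true means v_1)
   is encoded as the function sending w to the polynomial 'X^i; thus a vector
   is a function from words to polynomials (finite linear combinations). *)
Definition vec (n : nat) := {ffun n.-tuple bool -> {poly K}}.

Definition bvec n (i : nat) (w : n.-tuple bool) : vec n :=
  [ffun w' => if w' == w then 'X^i else 0].

Definition linext n m (f : nat -> n.-tuple bool -> vec m) (x : vec n) : vec m :=
  \sum_(w : n.-tuple bool) \sum_(i < size (x w)) (x w)`_i *: f i w.

Definition upd n (w : n.-tuple bool) (j : 'I_n) (b : bool) : n.-tuple bool :=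
  [tuple (if k == j then b else tnth w k) | k < n].

(* eigenvalue of K on v_b in V_1 *)
Definition Kscal (b : bool) : K := if b then q^-1 else q.

(* eigenvalue of K on v_i in M(mu + k) *)
Definition Kver (k : int) (i : nat) : K := Q * q ^ (k - (i%:Z *+ 2)).

(* action of the generators on M(mu + k) (x) V_1^{(x) n}, via the iterated
   coproduct: Delta(K) = K(x)K, Delta(E) = E(x)K + 1(x)E,
   Delta(F) = F(x)1 + K^-1(x)F *)
Definition actK (k : int) n : vec n -> vec n :=
  linext (fun i w => (Kver k i * \prod_(j < n) Kscal (tnth w j)) *: bvec i w).

Definition actKi (k : int) n : vec n -> vec n :=
  linext (fun i w => (Kver k i * \prod_(j < n) Kscal (tnth w j))^-1 *: bvec i w).

Definition actE (k : int) n : vec n -> vec n :=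
  linext (fun i w =>
    (if i is i'.+1 then (qint i%:Z * \prod_(j < n) Kscal (tnth w j)) *: bvec i' w
     else 0)
    + \sum_(j < n | tnth w j)
        (\prod_(l < n | (j < l)%N) Kscal (tnth w l)) *: bvec i (upd w j false)).

Definition actF (k : int) n : vec n -> vec n :=
  linext (fun i w =>
    qmu (k - i%:Z) *: bvec i.+1 w
    + \sum_(j < n | ~~ tnth w j)
        ((Kver k i)^-1 * \prod_(l < n | (l < j)%N) (Kscal (tnth w l))^-1)
          *: bvec i (upd w j true)).

Definition is_module_endo (k : int) n (f : vec n -> vec n) : Prop :=
  [/\ forall x, f (actK k x) = actK k (f x),
      forall x, f (actKi k x) = actKi k (f x),
      forall x, f (actE k x) = actE k (f x) &
      forall x, f (actF k x) = actF k (f x)].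

(* E_{lambda, j} : M(lambda) (x) V_1 (x) V_1^{(x) j} -> M(lambda+1) (x) V_1^{(x) j},
   lambda = mu + k (E_lambda does not depend on lambda):
   E(v_i (x) v_0) = q^i v_i,  E(v_i (x) v_1) = v_{i+1}. *)
Definition Emap (k : int) j : vec j.+1 -> vec j :=
  linext (fun i (w : j.+1.-tuple bool) =>
    if thead w then bvec i.+1 (behead_tuple w)
    else q ^+ i *: bvec i (behead_tuple w)).

(* F_{lambda, j} : M(lambda+1) (x) V_1^{(x) j} -> M(lambda) (x) V_1 (x) V_1^{(x) j}:
   F(v_i) = [lambda+1-i] v_i (x) v_0 + q^{i-lambda-1} [i] v_{i-1} (x) v_1. *)
Definition Fmap (k : int) j : vec j -> vec j.+1 :=
  linext (fun i (w : j.-tuple bool) =>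
    qmu (k + 1 - i%:Z) *: bvec i (cons_tuple false w)
    + (if i is i'.+1 then (q ^ (i%:Z - k - 1) / Q * qint i%:Z)
                          *: bvec i' (cons_tuple true w)
       else 0)).

(* Gchain m k = F_{mu+k, m-1} F_{mu+k+1, m-2} ... F_{mu+k+m-1}
                E_{mu+k+m-1} ... E_{mu+k+1, m-2} E_{mu+k, m-1}
   (an endomorphism of M(mu+k) (x) V_1^{(x) m}) *)
Fixpoint Gchain (m : nat) (k : int) : vec m -> vec m :=
  match m return vec m -> vec m with
  | 0 => id
  | m'.+1 => fun x => Fmap k (@Gchain m' (k + 1) (Emap k x))
  end.

Definition Pmu (n : nat) (x : vec n) : vec n :=
  (\prod_(1 <= j < n.+1) qmu j%:Z)^-1 *: @Gchain n 0 x.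

(* epsilon_i : M(mu) (x) V_1^{(x) n} -> M(mu) (x) V_1^{(x) (n-2)}, contracting
   the i-th and (i+1)-st factors V_1 (word positions i-1, i, 0-based):
   eps(v0 v0) = eps(v1 v1) = 0, eps(v0 v1) = -q, eps(v1 v0) = 1 *)
Definition epsc (b c : bool) : K :=
  match b, c with
  | false, true => - q
  | true, false => 1
  | _, _ => 0
  end.

Definition eps_i n (i : nat) : vec n -> vec (n - 2) :=
  linext (fun k (w : n.-tuple bool) =>
    epsc (nth false w i.-1) (nth false w i)
      *: bvec k (insubd (nseq_tuple (n - 2) false)
                        (take i.-1 w ++ drop i.+1 w))).

(* eta_i : M(mu) (x) V_1^{(x) (n-2)} -> M(mu) (x) V_1^{(x) n}, inserting
   eta(1) = v0 (x) v1 - q^-1 v1 (x) v0 at positions i, i+1 *)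
Definition eta_i n (i : nat) : vec (n - 2) -> vec n :=
  linext (fun k (w : (n - 2).-tuple bool) =>
    let ins p := insubd (nseq_tuple n false) (take i.-1 w ++ p ++ drop i.-1 w) in
    bvec k (ins [:: false; true]) - q^-1 *: bvec k (ins [:: true; false])).

End Generic.

From HB Require Import structures.
From mathcomp Require Import all_boot all_algebra.
From mathcomp Require Import ring zify.
From mathcomp Require Import mpoly fraction.

(* The composite E = E_{mu+n-1} E_{mu+n-2,1} ... E_{mu,n-1} maps
   M(mu) (x) V_1^{(x) n} to M(mu+n), and F = F_{mu,n-1} ... F_{mu+n-1} maps
   it back.  Each E_lambda and F_lambda intertwines the actions of K^{+-1}, E
   and F (checked on basis vectors through the iterated coproduct), and
   E_lambda F_lambda = [lambda+1] Id; hence E F = [mu+n] ... [mu+1] Id and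
   P = F E / ([mu+n] ... [mu+1]) is an idempotent module endomorphism.
   Moreover E eta_i = 0: both summands of eta_i are sent to the same basis
   vector of M(mu+n), with powers of q differing by the factor q that the
   coefficient -q^{-1} in eta cancels.  Dually eps_i F = 0: in the image of F
   the coefficient of a word with v_1 v_0 at positions i, i+1 is q times that
   of the same word with v_0 v_1 there, and eps weighs these by 1 and -q. *)

Set Implicit Arguments.
Unset Strict Implicit.
Unset Printing Implicit Defensive.

Import GRing.Theory.
Local Open Scope ring_scope.

(* Declaring the lmodule structure on [vec K n] itself, instead of letting
   unification unfold [vec] to a finfun type, keeps rewriting with the generic
   [linear*] lemmas fast. *)
Section VecLmodule.
Variables (K : fieldType) (n : nat).
HB.instance Definition _ := GRing.Lmodule.on (vec K n).
End VecLmodule.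

Section LinearExtension.
Variable K : fieldType.

Lemma sum_coef_widen (V : lmodType K) (p : {poly K}) (g : nat -> V) N :
  (size p <= N)%N -> \sum_(i < size p) p`_i *: g i = \sum_(i < N) p`_i *: g i.
Proof.
move=> hN; rewrite (big_ord_widen N (fun i => p`_i *: g i) hN) big_mkcond /=.
apply: eq_bigr => i _; case: ifP => // /negbT; rewrite -leqNgt => h.
by rewrite nth_default // scale0r.
Qed.

Lemma sum_coef_monomial (V : lmodType K) (a : K) d (g : nat -> V) :
  \sum_(i < size (a *: 'X^d : {poly K})) (a *: 'X^d : {poly K})`_i *: g i = a *: g d.
Proof.
rewrite (@sum_coef_widen _ _ g d.+1) ?(leq_trans (size_scale_leq _ _)) ?size_polyXn //.
rewrite (bigD1 ord_max) //= big1 ?addr0 => [|i hi]; first by rewrite coefZ coefXn eqxx mulr1.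
rewrite coefZ coefXn; case: eqP => [e|]; last by rewrite mulr0 scale0r.
by move: hi; rewrite -val_eqE /= e eqxx.
Qed.

Lemma sum_scale_pred1 (T : finType) (V : lmodType K) (x : T -> V) (a : T) c :
  \sum_w (if w == a then c else 0) *: x w = c *: x a.
Proof. by rewrite (bigD1 a) //= eqxx big1 ?addr0 // => w /negbTE ->; rewrite scale0r. Qed.

Lemma linext_widen n m (f : nat -> n.-tuple bool -> vec K m) (x : vec K n) N :
  (forall w, size (x w) <= N)%N ->
  linext f x = \sum_w \sum_(i < N) (x w)`_i *: f i w.
Proof. by move=> hN; apply: eq_bigr => w _; rewrite (sum_coef_widen (f^~ w) (hN w)). Qed.

Lemma linext_is_linear n m (f : nat -> n.-tuple bool -> vec K m) : linear (linext f).
Proof.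
move=> a x y; set N := (\sum_w (size (x w) + size (y w)))%N.
have hxy w : (size (x w) + size (y w) <= N)%N by rewrite /N (bigD1 w) ?leq_addr.
have hx w : (size (x w) <= N)%N by apply: leq_trans (hxy w); apply: leq_addr.
have hy w : (size (y w) <= N)%N by apply: leq_trans (hxy w); apply: leq_addl.
rewrite !(linext_widen f (N := N)) //; last first.
  move=> w; rewrite !ffunE; apply: leq_trans (size_polyD _ _) _.
  by rewrite geq_max hy (leq_trans (size_scale_leq _ _)).
rewrite scaler_sumr -big_split /=; apply: eq_bigr => w _.
rewrite scaler_sumr -big_split /=; apply: eq_bigr => i _.
by rewrite !ffunE coefD coefZ scalerDl scalerA.
Qed.

Lemma linext_bvec n m (f : nat -> n.-tuple bool -> vec K m) i w :
  linext f (bvec K i w) = f i w.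
Proof.
rewrite (linext_widen f (N := i.+1)); last first.
  by move=> u; rewrite ffunE; case: eqP; rewrite ?size_polyXn ?size_poly0.
rewrite (bigD1 w) //= [X in _ + X]big1 ?addr0 => [|u /negbTE hu]; last first.
  by apply: big1 => j _; rewrite ffunE hu coef0 scale0r.
rewrite ffunE eqxx (bigD1 ord_max) //= big1 ?addr0 => [|j hj].
  by rewrite coefXn eqxx scale1r.
rewrite coefXn; case: eqP => [e|]; last by rewrite scale0r.
by move: hj; rewrite -val_eqE /= e eqxx.
Qed.

Lemma vec_expand n (x : vec K n) :
  x = \sum_w \sum_(i < size (x w)) (x w)`_i *: bvec K i w.
Proof.
apply/ffunP => u; rewrite sum_ffunE (bigD1 u) //= [X in _ + X]big1 ?addr0 => [|w /negbTE hw].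
  rewrite sum_ffunE; under eq_bigr do rewrite !ffunE eqxx.
  by rewrite -poly_def coefK.
by rewrite sum_ffunE; apply: big1 => i _; rewrite !ffunE eq_sym hw scaler0.
Qed.

Lemma eq_linear_bvec n m (f g : {linear vec K n -> vec K m}) :
  (forall i w, f (bvec K i w) = g (bvec K i w)) -> f =1 g.
Proof.
move=> fg x; rewrite (vec_expand x) !linear_sum; apply: eq_bigr => w _.
by rewrite !linear_sum; apply: eq_bigr => i _; rewrite !linearZ fg.
Qed.

(* The composite form lets [apply:] infer both linear structures from a goal
   [f1 (f2 x) = g1 (g2 x)]. *)
Lemma eq_linear_comp_bvec n m m' p
    (f1 : {linear vec K m -> vec K p}) (f2 : {linear vec K n -> vec K m})
    (g1 : {linear vec K m' -> vec K p}) (g2 : {linear vec K n -> vec K m'}) :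
  (forall i w, f1 (f2 (bvec K i w)) = g1 (g2 (bvec K i w))) ->
  forall x, f1 (f2 x) = g1 (g2 x).
Proof. exact: (eq_linear_bvec (f := f1 \o f2) (g := g1 \o g2)). Qed.

End LinearExtension.

Section LinearInstances.
Variables (K : fieldType) (q Q : K) (k : int) (n i : nat).

HB.instance Definition _ := GRing.isLinear.Build K (vec K n.+1) (vec K n) *:%R
  (@Emap K q k n) (linext_is_linear _).
HB.instance Definition _ := GRing.isLinear.Build K (vec K n) (vec K n.+1) *:%R
  (@Fmap K q Q k n) (linext_is_linear _).
HB.instance Definition _ := GRing.isLinear.Build K (vec K n) (vec K n) *:%R
  (@actK K q Q k n) (linext_is_linear _).
HB.instance Definition _ := GRing.isLinear.Build K (vec K n) (vec K n) *:%R
  (@actKi K q Q k n) (linext_is_linear _).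
HB.instance Definition _ := GRing.isLinear.Build K (vec K n) (vec K n) *:%R
  (@actE K q k n) (linext_is_linear _).
HB.instance Definition _ := GRing.isLinear.Build K (vec K n) (vec K n) *:%R
  (@actF K q Q k n) (linext_is_linear _).
HB.instance Definition _ := GRing.isLinear.Build K (vec K n) (vec K (n - 2)) *:%R
  (@eps_i K q n i) (linext_is_linear _).
HB.instance Definition _ := GRing.isLinear.Build K (vec K (n - 2)) (vec K n) *:%R
  (@eta_i K q n i) (linext_is_linear _).

End LinearInstances.

Section Chains.
Variables (K : fieldType) (q Q : K).

Local Notation vec := (vec K).

(* The two halves of [Gchain]; [vec 0] stands for M(mu + k + m). *)
Fixpoint Echain m (k : int) : vec m -> vec 0 :=
  match m return vec m -> vec 0 with
  | 0 => id
  | m'.+1 => fun x => @Echain m' (k + 1) (Emap q k x)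
  end.

Fixpoint Fchain m (k : int) : vec 0 -> vec m :=
  match m return vec 0 -> vec m with
  | 0 => id
  | m'.+1 => fun y => Fmap q Q k (@Fchain m' (k + 1) y)
  end.

Lemma Echain_is_linear m k : linear (@Echain m k).
Proof. by elim: m k => [|m IH] k a x y //=; rewrite linearP IH. Qed.

Lemma Fchain_is_linear m k : linear (@Fchain m k).
Proof. by elim: m k => [|m IH] k a x y //=; rewrite IH linearP. Qed.

End Chains.

Section ChainInstances.
Variables (K : fieldType) (q Q : K) (m : nat) (k : int).
HB.instance Definition _ := GRing.isLinear.Build K (vec K m) (vec K 0) *:%R
  (@Echain K q m k) (@Echain_is_linear K q m k).
HB.instance Definition _ := GRing.isLinear.Build K (vec K 0) (vec K m) *:%R
  (@Fchain K q Q m k) (@Fchain_is_linear K q Q m k).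
End ChainInstances.

Lemma tupleS_ind n (P : n.+1.-tuple bool -> Prop) :
  (forall b (w : n.-tuple bool), P [tuple of b :: w]) -> forall w, P w.
Proof. by move=> h w; rewrite (tuple_eta w); apply: h. Qed.

Lemma behead_tuple_cons n (b : bool) (w : n.-tuple bool) :
  behead_tuple [tuple of b :: w] = w.
Proof. exact: val_inj. Qed.

Lemma eq_tuple_cons n b b' (w w' : n.-tuple bool) :
  ([tuple of b :: w] == [tuple of b' :: w']) = (b == b') && (w == w').
Proof. by rewrite -val_eqE /= eqseq_cons val_eqE. Qed.

Lemma upd_cons_ord0 n (b c : bool) (w : n.-tuple bool) :
  upd [tuple of b :: w] ord0 c = [tuple of c :: w].
Proof.
apply: eq_from_tnth => k; rewrite tnth_mktuple.
case: (unliftP ord0 k) => [k'|] ->; last by rewrite eqxx !tnth0.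
by rewrite eq_sym (negbTE (neq_lift _ _)) !tnthS.
Qed.

Lemma upd_cons_lift n (b c : bool) (w : n.-tuple bool) (j : 'I_n) :
  upd [tuple of b :: w] (lift ord0 j) c = [tuple of b :: upd w j c].
Proof.
apply: eq_from_tnth => k; rewrite tnth_mktuple.
case: (unliftP ord0 k) => [k'|] ->; last by rewrite (negbTE (neq_lift _ _)) !tnth0.
by rewrite !tnthS tnth_mktuple (inj_eq (@lift_inj _ ord0)).
Qed.

Lemma big_ord_recl_cond (V : zmodType) n (P : pred 'I_n.+1) (F : 'I_n.+1 -> V) :
  \sum_(j < n.+1 | P j) F j =
  (if P ord0 then F ord0 else 0) + \sum_(j < n | P (lift ord0 j)) F (lift ord0 j).
Proof. by rewrite big_mkcond big_ord_recl -big_mkcond. Qed.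

Definition ins_pair n i (u : (n - 2).-tuple bool) (p : seq bool) : n.-tuple bool :=
  insubd (nseq_tuple n false) (take i.-1 u ++ p ++ drop i.-1 u).

Definition del_pair n i (w : n.-tuple bool) : (n - 2).-tuple bool :=
  insubd (nseq_tuple (n - 2) false) (take i.-1 w ++ drop i.+1 w).

Lemma val_ins_pair n i (u : (n - 2).-tuple bool) p :
  (2 <= n)%N -> size p = 2%N -> val (ins_pair i u p) = take i.-1 u ++ p ++ drop i.-1 u.
Proof.
move=> n2 p2; rewrite val_insubd !size_cat addnCA -size_cat cat_take_drop.
by rewrite size_tuple p2 addnC subnK // eqxx.
Qed.

(* [eps_i p.+1] contracts, and [ins_pair p.+1] inserts at, the 0-based
   positions [p] and [p.+1]. *)
Section Pairs.
Variables (n p : nat).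
Hypothesis pn : (p.+2 <= n)%N.

Lemma val_del_pair (w : n.-tuple bool) : val (del_pair p.+1 w) = take p w ++ drop p.+2 w.
Proof.
rewrite val_insubd size_cat size_takel ?size_drop ?size_tuple; last by lia.
by have -> : (p + (n - p.+2) == n - 2)%N by apply/eqP; lia.
Qed.

Lemma val_ins_pair2 (u : (n - 2).-tuple bool) c d :
  val (ins_pair p.+1 u [:: c; d]) = take p u ++ [:: c, d & drop p u].
Proof. by rewrite val_ins_pair //; lia. Qed.

Lemma size_take_pair (u : (n - 2).-tuple bool) : size (take p u) = p.
Proof. by rewrite size_takel // size_tuple; lia. Qed.

Lemma del_ins_pair (u : (n - 2).-tuple bool) c d :
  del_pair p.+1 (ins_pair p.+1 u [:: c; d]) = u.
Proof.
apply: val_inj; rewrite val_del_pair val_ins_pair2 take_size_cat ?size_take_pair //.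
rewrite -[[:: c, d & _]]/([:: c; d] ++ _) catA drop_size_cat ?cat_take_drop //.
by rewrite size_cat size_take_pair addn2.
Qed.

Lemma nth_ins_pair (u : (n - 2).-tuple bool) c d :
  nth false (ins_pair p.+1 u [:: c; d]) p = c /\
  nth false (ins_pair p.+1 u [:: c; d]) p.+1 = d.
Proof.
by rewrite val_ins_pair2 !nth_cat size_take_pair ltnn ltnNge leqnSn subnn subSnn.
Qed.

Lemma ins_del_pair (w : n.-tuple bool) :
  w = ins_pair p.+1 (del_pair p.+1 w) [:: nth false w p; nth false w p.+1].
Proof.
apply: val_inj; rewrite val_ins_pair2 val_del_pair.
have wp : size (take p w) = p by rewrite size_takel // size_tuple; lia.
rewrite take_size_cat // drop_size_cat // -[LHS](cat_take_drop p w); congr (_ ++ _).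
by rewrite (drop_nth false) ?(drop_nth false (n := p.+1)) // size_tuple; lia.
Qed.

Lemma eq_ins_pair (u u' : (n - 2).-tuple bool) c d c' d' :
  (ins_pair p.+1 u [:: c; d] == ins_pair p.+1 u' [:: c'; d']) =
  [&& u == u', c == c' & d == d'].
Proof.
apply/eqP/and3P => [e | [/eqP-> /eqP-> /eqP->] //].
have [c_ d_] := nth_ins_pair u c d; have [c'_ d'_] := nth_ins_pair u' c' d'.
split; apply/eqP; first by rewrite -(del_ins_pair u c d) e del_ins_pair.
  by rewrite -c_ e c'_.
by rewrite -d_ e d'_.
Qed.

End Pairs.

Section Regroup.
Variables (R : comNzRingType) (V : lmodType R).

Lemma regroup_Fmap_actE (A B : V) (I : Type) (r : seq I) (P : pred I)
    (d e f : I -> R) (X Y : I -> V) al m1 c1 m2 c be ga p :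
  al * m1 = m2 * be + c * p -> al * c1 = c * ga ->
  (forall j, d j * m2 = m2 * e j) -> (forall j, d j * c = c * f j) ->
  al *: (m1 *: A + c1 *: B) + \sum_(j <- r | P j) d j *: (m2 *: X j + c *: Y j) =
  m2 *: (be *: A + (0 + \sum_(j <- r | P j) e j *: X j))
  + c *: (ga *: B + (p *: A + \sum_(j <- r | P j) f j *: Y j)).
Proof.
move=> h1 h2 h3 h4.
rewrite add0r !scalerDr !scalerA h1 h2 scalerDl !scaler_sumr.
have -> : \sum_(j <- r | P j) d j *: (m2 *: X j + c *: Y j) =
  \sum_(j <- r | P j) (m2 * e j) *: X j + \sum_(j <- r | P j) (c * f j) *: Y j.
  by rewrite -big_split; apply: eq_bigr => j _; rewrite scalerDr !scalerA h3 h4.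
under [in RHS]eq_bigr do rewrite scalerA.
under [X in _ = _ + (_ + (_ + X))]eq_bigr do rewrite scalerA.
by rewrite -!addrA; congr (_ + _); rewrite addrCA [RHS]addrCA; congr (_ + _); rewrite addrCA.
Qed.

Lemma regroup_Fmap_actF (A B B' : V) (I : Type) (r : seq I) (P : pred I)
    (e g h : I -> R) (X Y : I -> V) m m' c1 c a b d :
  m * m' = m * a -> m * c1 = m * b + c * d -> (c * d) *: B' = (c * d) *: B ->
  (forall j, e j * m = m * g j) -> (forall j, e j * c = c * h j) ->
  m *: (m' *: A + c1 *: B) + \sum_(j <- r | P j) e j *: (m *: X j + c *: Y j) =
  m *: (a *: A + (b *: B + \sum_(j <- r | P j) g j *: X j))
  + c *: (d *: B' + (0 + \sum_(j <- r | P j) h j *: Y j)).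
Proof.
move=> h1 h2 hB h3 h4.
rewrite add0r !scalerDr !scalerA hB h1 h2 scalerDl !scaler_sumr.
have -> : \sum_(j <- r | P j) e j *: (m *: X j + c *: Y j) =
  \sum_(j <- r | P j) (m * g j) *: X j + \sum_(j <- r | P j) (c * h j) *: Y j.
  by rewrite -big_split; apply: eq_bigr => j _; rewrite scalerDr !scalerA h3 h4.
under [in RHS]eq_bigr do rewrite scalerA.
under [X in _ = _ + (_ + X)]eq_bigr do rewrite scalerA.
by rewrite -!addrA; congr (_ + _); rewrite (addrCA ((c * d) *: B)).
Qed.

End Regroup.

Section Projector.
Variables (K : fieldType) (q Q : K).
Hypotheses (q_neq0 : q != 0) (Q_neq0 : Q != 0) (qq1_neq0 : q * q - 1 != 0).

Local Notation vec := (vec K).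
Local Notation bvec := (bvec K).

Definition Kword n (w : n.-tuple bool) := \prod_(j < n) Kscal q (tnth w j).

Lemma Kscal_neq0 b : Kscal q b != 0.
Proof. by case: b; rewrite /= ?invr_eq0. Qed.

Lemma Kword_neq0 n (w : n.-tuple bool) : Kword w != 0.
Proof. by apply/prodf_neq0 => j _; apply: Kscal_neq0. Qed.

Lemma Kword_cons n b (w : n.-tuple bool) : Kword [tuple of b :: w] = Kscal q b * Kword w.
Proof. by rewrite /Kword big_ord_recl tnth0; under eq_bigr do rewrite tnthS. Qed.

Lemma prod_Kscal_gt_cons n b (w : n.-tuple bool) (j : 'I_n) :
  \prod_(l < n.+1 | (lift ord0 j < l)%N) Kscal q (tnth [tuple of b :: w] l) =
  \prod_(l < n | (j < l)%N) Kscal q (tnth w l).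
Proof.
rewrite big_mkcond big_ord_recl /= mul1r [RHS]big_mkcond; apply: eq_bigr => l _.
by rewrite /bump !leq0n !add1n ltnS tnthS.
Qed.

Lemma prod_Kscal_lt_cons n b (w : n.-tuple bool) (j : 'I_n) :
  \prod_(l < n.+1 | (l < lift ord0 j)%N) (Kscal q (tnth [tuple of b :: w] l))^-1 =
  (Kscal q b)^-1 * \prod_(l < n | (l < j)%N) (Kscal q (tnth w l))^-1.
Proof.
rewrite big_mkcond big_ord_recl /= tnth0 [in RHS]big_mkcond; congr (_ * _).
by apply: eq_bigr => l _; rewrite /bump !leq0n !add1n ltnS tnthS.
Qed.

Lemma qint0 : qint q 0 = 0.
Proof. by rewrite /qint oppr0 subrr mul0r. Qed.

Lemma Emap_bvec k n i b (w : n.-tuple bool) :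
  Emap q k (bvec i [tuple of b :: w]) = if b then bvec i.+1 w else q ^+ i *: bvec i w.
Proof. by rewrite /Emap linext_bvec theadE behead_tuple_cons. Qed.

Lemma Fmap_bvec k n i (w : n.-tuple bool) :
  Fmap q Q k (bvec i w) = qmu q Q (k + 1 - i%:Z) *: bvec i [tuple of false :: w]
    + (q ^ (i%:Z - k - 1) / Q * qint q i%:Z) *: bvec i.-1 [tuple of true :: w].
Proof. by rewrite /Fmap linext_bvec; case: i => [|i] //=; rewrite qint0 mulr0 scale0r. Qed.

Lemma actK_bvec k n i (w : n.-tuple bool) :
  actK q Q k (bvec i w) = (Kver q Q k i * Kword w) *: bvec i w.
Proof. exact: linext_bvec. Qed.

Lemma actKi_bvec k n i (w : n.-tuple bool) :
  actKi q Q k (bvec i w) = (Kver q Q k i * Kword w)^-1 *: bvec i w.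
Proof. exact: linext_bvec. Qed.

Lemma actE_bvec k n i (w : n.-tuple bool) :
  actE q k (bvec i w) = (qint q i%:Z * Kword w) *: bvec i.-1 w
    + \sum_(j < n | tnth w j)
        (\prod_(l < n | (j < l)%N) Kscal q (tnth w l)) *: bvec i (upd w j false).
Proof. by rewrite /actE linext_bvec; case: i => [|i] //=; rewrite qint0 mul0r scale0r. Qed.

Lemma actF_bvec k n i (w : n.-tuple bool) :
  actF q Q k (bvec i w) = qmu q Q (k - i%:Z) *: bvec i.+1 w
    + \sum_(j < n | ~~ tnth w j)
        ((Kver q Q k i)^-1 * \prod_(l < n | (l < j)%N) (Kscal q (tnth w l))^-1)
          *: bvec i (upd w j true).
Proof. exact: linext_bvec. Qed.

Lemma actE_bvec_cons k n i b (w : n.-tuple bool) :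
  actE q k (bvec i [tuple of b :: w]) =
    (qint q i%:Z * (Kscal q b * Kword w)) *: bvec i.-1 [tuple of b :: w]
    + ((if b then Kword w *: bvec i [tuple of false :: w] else 0)
    + \sum_(j < n | tnth w j) (\prod_(l < n | (j < l)%N) Kscal q (tnth w l))
         *: bvec i [tuple of b :: upd w j false]).
Proof.
rewrite actE_bvec Kword_cons big_ord_recl_cond tnth0 upd_cons_ord0.
congr (_ + (_ + _)).
  case: b; rewrite // big_mkcond big_ord_recl /= mul1r /Kword.
  by under eq_bigr do rewrite tnthS.
by apply: eq_big => [j|j _]; rewrite ?tnthS // prod_Kscal_gt_cons upd_cons_lift.
Qed.

Lemma actF_bvec_cons k n i b (w : n.-tuple bool) :
  actF q Q k (bvec i [tuple of b :: w]) =
    qmu q Q (k - i%:Z) *: bvec i.+1 [tuple of b :: w]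
    + ((if ~~ b then (Kver q Q k i)^-1 *: bvec i [tuple of true :: w] else 0)
    + \sum_(j < n | ~~ tnth w j)
        ((Kver q Q k i)^-1 *
         ((Kscal q b)^-1 * \prod_(l < n | (l < j)%N) (Kscal q (tnth w l))^-1))
          *: bvec i [tuple of b :: upd w j true]).
Proof.
rewrite actF_bvec big_ord_recl_cond tnth0 upd_cons_ord0.
congr (_ + (_ + _)); first by case: b; rewrite //= big1 ?mulr1.
by apply: eq_big => [j|j _]; rewrite ?tnthS // prod_Kscal_lt_cons upd_cons_lift.
Qed.

Lemma qz_neq0 (k : int) : q ^ k != 0. Proof. exact: expfz_neq0. Qed.
Lemma qn_neq0 (i : nat) : q ^+ i != 0. Proof. exact: expf_neq0. Qed.

Ltac qsimpl := rewrite /qint /qmu /Kver /Kscal ?mulr2n ?opprD ?opprK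
  ?(expfzDr _ _ q_neq0) -?invr_expz -?exprnP ?expr1z ?exprS ?expr0 ?invr1 ?mulr1
  ?invrK ?div1r.
Ltac qfield := field; by rewrite ?q_neq0 ?Q_neq0 ?qq1_neq0 ?qz_neq0 ?qn_neq0 ?Kword_neq0.

Lemma Emap_actK k n (x : vec n.+1) :
  Emap q k (actK q Q k x) = actK q Q (k + 1) (Emap q k x).
Proof.
move: x; apply: eq_linear_comp_bvec => i; apply: tupleS_ind => b w /=.
rewrite actK_bvec Kword_cons linearZ /= !Emap_bvec.
by case: b; rewrite ?linearZ /= actK_bvec ?scalerA; congr (_ *: _); qsimpl; qfield.
Qed.

Lemma Emap_actKi k n (x : vec n.+1) :
  Emap q k (actKi q Q k x) = actKi q Q (k + 1) (Emap q k x).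
Proof.
move: x; apply: eq_linear_comp_bvec => i; apply: tupleS_ind => b w /=.
rewrite actKi_bvec Kword_cons linearZ /= !Emap_bvec.
by case: b; rewrite ?linearZ /= actKi_bvec ?scalerA; congr (_ *: _); qsimpl; qfield.
Qed.

Lemma Emap_actE k n (x : vec n.+1) :
  Emap q k (actE q k x) = actE q (k + 1) (Emap q k x).
Proof.
move: x; apply: eq_linear_comp_bvec => i; apply: tupleS_ind => b w /=.
rewrite actE_bvec_cons !linearD linearZ linear_sum /= Emap_bvec.
under eq_bigr do rewrite linearZ /= Emap_bvec.
case: b => /=.
- rewrite linearZ /= !Emap_bvec /= actE_bvec; case: i => [|i] /=.
    by rewrite qint0 !mul0r !scale0r !add0r scalerA; congr (_ *: _ + _); qsimpl; qfield.
  by rewrite addrA scalerA -scalerDl; congr (_ *: _ + _); qsimpl; qfield.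
- rewrite linear0 add0r Emap_bvec [RHS]linearZ /= actE_bvec scalerDr; case: i => [|i] /=.
    rewrite qint0 !mul0r !scale0r scaler0 !add0r scaler_sumr; apply: eq_bigr => j _.
    by rewrite !scalerA mulrC.
  congr (_ + _); first by rewrite !scalerA; congr (_ *: _); qsimpl; qfield.
  by rewrite scaler_sumr; apply: eq_bigr => j _; rewrite !scalerA mulrC.
Qed.

Lemma Emap_actF k n (x : vec n.+1) :
  Emap q k (actF q Q k x) = actF q Q (k + 1) (Emap q k x).
Proof.
move: x; apply: eq_linear_comp_bvec => i; apply: tupleS_ind => b w /=.
rewrite actF_bvec_cons !linearD linearZ linear_sum /= Emap_bvec.
under eq_bigr do rewrite linearZ /= Emap_bvec.
case: b => /=.
- rewrite linear0 add0r Emap_bvec actF_bvec; congr (_ *: _ + _); first by qsimpl; qfield.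
  apply: eq_bigr => j _; congr (_ *: _).
  by move: (\prod_(l < n | _) _) => P; qsimpl; qfield.
- rewrite !linearZ /= !Emap_bvec [RHS]linearZ /= actF_bvec scalerDr addrA !scalerA -scalerDl.
  congr (_ *: _ + _); first by qsimpl; qfield.
  rewrite scaler_sumr; apply: eq_bigr => j _; rewrite !scalerA; congr (_ *: _).
  by move: (\prod_(l < n | _) _) => P; qsimpl; qfield.
Qed.

Lemma Fmap_actK k n (y : vec n) :
  Fmap q Q k (actK q Q (k + 1) y) = actK q Q k (Fmap q Q k y).
Proof.
move: y; apply: eq_linear_comp_bvec => i w /=.
rewrite actK_bvec linearZ /= Fmap_bvec [RHS]linearD ![in RHS]linearZ /=.
rewrite !actK_bvec !Kword_cons.
by rewrite scalerDr !scalerA; case: i => [|i] /=; congr (_ *: _ + _ *: _); qsimpl; qfield.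
Qed.

Lemma Fmap_actKi k n (y : vec n) :
  Fmap q Q k (actKi q Q (k + 1) y) = actKi q Q k (Fmap q Q k y).
Proof.
move: y; apply: eq_linear_comp_bvec => i w /=.
rewrite actKi_bvec linearZ /= Fmap_bvec [RHS]linearD ![in RHS]linearZ /=.
rewrite !actKi_bvec !Kword_cons.
by rewrite scalerDr !scalerA; case: i => [|i] /=; congr (_ *: _ + _ *: _); qsimpl; qfield.
Qed.

Lemma Fmap_actE k n (y : vec n) :
  Fmap q Q k (actE q (k + 1) y) = actE q k (Fmap q Q k y).
Proof.
move: y; apply: eq_linear_comp_bvec => i w /=.
rewrite actE_bvec linearD linearZ linear_sum /= Fmap_bvec.
under eq_bigr do rewrite linearZ /= Fmap_bvec.
rewrite Fmap_bvec [RHS]linearD ![in RHS]linearZ /= !actE_bvec_cons.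
apply: regroup_Fmap_actE => [||j|j]; rewrite ?[_ * qmu _ _ _]mulrC ?[_ * (_ / Q * _)]mulrC //.
- by case: i => [|i] /=; rewrite ?qint0 ?mul0r ?mulr0 ?add0r //; qsimpl; qfield.
- by case: i => [|[|i]] /=; rewrite ?qint0 ?mul0r ?mulr0 //; qsimpl; qfield.
Qed.

Lemma Fmap_actF k n (y : vec n) :
  Fmap q Q k (actF q Q (k + 1) y) = actF q Q k (Fmap q Q k y).
Proof.
move: y; apply: eq_linear_comp_bvec => i w /=.
rewrite actF_bvec linearD linearZ linear_sum /= Fmap_bvec.
under eq_bigr do rewrite linearZ /= Fmap_bvec.
rewrite Fmap_bvec [RHS]linearD ![in RHS]linearZ /= !actF_bvec_cons.
apply: regroup_Fmap_actF => [|||j|j].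
- by qsimpl; qfield.
- by case: i => [|i] /=; rewrite ?qint0 ?mul0r ?mulr0 ?addr0 //; qsimpl; qfield.
- by case: i => [|i] /=; rewrite ?qint0 ?mulr0 ?mul0r ?scale0r.
- by move: (\prod_(l < n | _) _) => P; qsimpl; qfield.
- case: i => [|i] /=; rewrite ?qint0 ?mulr0 ?mul0r //.
  by move: (\prod_(l < n | _) _) => P; qsimpl; qfield.
Qed.

Lemma Emap_Fmap k n (y : vec n) : Emap q k (Fmap q Q k y) = qmu q Q (k + 1) *: y.
Proof.
move: y; apply: (eq_linear_bvec (f := @Emap K q k n \o @Fmap K q Q k n)
  (g := qmu q Q (k + 1) \*: idfun)) => i w /=.
rewrite Fmap_bvec linearD !linearZ /= !Emap_bvec scalerA.
case: i => [|i] /=; rewrite ?qint0 ?mulr0 ?scale0r ?addr0.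
  by congr (_ *: _); qsimpl; qfield.
by rewrite -scalerDl; congr (_ *: _); qsimpl; qfield.
Qed.

Lemma Gchain_intertwine (A : int -> forall n, vec n -> vec n) :
  (forall k n (x : vec n.+1), Emap q k (A k n.+1 x) = A (k + 1) n (Emap q k x)) ->
  (forall k n (y : vec n), Fmap q Q k (A (k + 1) n y) = A k n.+1 (Fmap q Q k y)) ->
  forall m k (x : vec m), Gchain q Q k (A k m x) = A k m (Gchain q Q k x).
Proof. by move=> hE hF; elim=> [|m IH] k x //=; rewrite hE IH hF. Qed.

Lemma Gchain_Fchain_Echain m k (x : vec m) : Gchain q Q k x = Fchain q Q m k (Echain q k x).
Proof. by elim: m k x => [|m IH] k x //=; rewrite IH. Qed.

Definition qmu_rising m (k : int) := \prod_(1 <= j < m.+1) qmu q Q (k + j%:Z).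

Lemma Echain_Fchain m k (y : vec 0) : Echain q k (Fchain q Q m k y) = qmu_rising m k *: y.
Proof.
elim: m k => [|m IH] k /=; first by rewrite /qmu_rising big_geq ?scale1r.
rewrite Emap_Fmap linearZ /= IH scalerA /qmu_rising [in RHS]big_nat_recl //.
by congr (_ * _ *: _); apply: eq_bigr => j _; rewrite -addrA -PoszD add1n.
Qed.

Fixpoint Echain_exp (j : nat) (w : seq bool) : nat :=
  match w with
  | [::] => 0
  | b :: w' => if b then Echain_exp j.+1 w' else (j + Echain_exp j w')%N
  end.

Lemma Echain_bvec m k j (w : m.-tuple bool) :
  Echain q k (bvec j w) = q ^+ Echain_exp j w *: bvec (j + count id w) [tuple].
Proof.
elim: m k j w => [|m IH] k j w; first by rewrite (tuple0 w) /= addn0 scale1r.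
move: w; apply: tupleS_ind => b w /=; rewrite Emap_bvec.
by case: b => /=; rewrite ?linearZ /= IH ?addSnnS // scalerA -exprD.
Qed.

Lemma Echain_exp_cat j a r :
  Echain_exp j (a ++ r) = (Echain_exp j a + Echain_exp (j + count id a) r)%N.
Proof.
elim: a j => [|b a IH] j /=; first by rewrite addn0.
by case: b => /=; rewrite IH addnA // addn1 addSn.
Qed.

Lemma eta_i_bvec n i j (u : (n - 2).-tuple bool) :
  eta_i q i (bvec j u) =
  bvec j (ins_pair i u [:: false; true]) - q^-1 *: bvec j (ins_pair i u [:: true; false]).
Proof. exact: linext_bvec. Qed.

Lemma Echain_eta_i n i k (y : vec (n - 2)) : (2 <= n)%N -> Echain q k (eta_i q i y) = 0.
Proof.
move=> n2; move: y; apply: (eq_linear_bvec (f := @Echain K q n k \o @eta_i K q n i) (g := \0)).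
move=> j u /=; rewrite eta_i_bvec linearB linearZ /= !Echain_bvec !val_ins_pair //.
rewrite !Echain_exp_cat !count_cat /= !addn0 !add0n.
set a := Echain_exp j _; set b := (j + _)%N; set c := Echain_exp _ (drop _ _).
by rewrite [(b.+1 + c)%N]addSn [(a + _.+1)%N]addnS exprS scalerA mulrA mulVf // mul1r subrr.
Qed.

Lemma Fmap_coord k n (y : vec n) b (w : n.-tuple bool) :
  (Fmap q Q k y) [tuple of b :: w] =
  \sum_(i < size (y w)) (y w)`_i *:
     (if b then (q ^ (i%:Z - k - 1) / Q * qint q i%:Z) *: 'X^(i.-1)
      else qmu q Q (k + 1 - i%:Z) *: 'X^i).
Proof.
rewrite sum_ffunE (bigD1 w) //= [X in _ + X]big1 ?addr0 => [|w' hw].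
  rewrite sum_ffunE; apply: eq_bigr => i _.
  rewrite !ffunE !eq_tuple_cons !eqxx !andbT; congr (_ *: _).
  case: b; case: i => [[|i] hi] /=;
    rewrite ?ffunE ?eq_tuple_cons ?eqxx ?scaler0 ?addr0 ?add0r //.
  by rewrite qint0 mulr0 scale0r.
have ww' : (w == w') = false by rewrite eq_sym; apply/negbTE.
rewrite sum_ffunE; apply: big1 => i _.
rewrite !ffunE !eq_tuple_cons ww' !andbF scaler0 add0r.
by case: i => [[|i] hi] /=; rewrite ?ffunE ?eq_tuple_cons ?ww' ?andbF ?scaler0.
Qed.

Fixpoint Fchain_coef (k : int) (j : nat) (w : seq bool) : K :=
  match w with
  | [::] => 1
  | b :: w' => Fchain_coef (k + 1) j w' *
      (if b then q ^ ((j - count id w')%N%:Z - k - 1) / Q * qint q (j - count id w')%N%:Z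
       else qmu q Q (k + 1 - (j - count id w')%N%:Z))
  end.

Lemma Fchain_coord m k j (w : m.-tuple bool) :
  (Fchain q Q m k (bvec j [tuple])) w = Fchain_coef k j w *: 'X^(j - count id w).
Proof.
elim: m k w => [|m IH] k w; first by rewrite (tuple0 w) /= ffunE eqxx scale1r subn0.
move: w; apply: tupleS_ind => b w /=; rewrite Fmap_coord IH.
rewrite (sum_coef_monomial _ _ (fun i : nat => if b
  then (q ^ (i%:Z - k - 1) / Q * qint q i%:Z) *: 'X^(i.-1)
  else qmu q Q (k + 1 - i%:Z) *: 'X^i)).
by case: b; rewrite scalerA /= ?add1n ?subnS ?add0n.
Qed.

Lemma Fchain_coef_cat k j a r :
  Fchain_coef k j (a ++ r) =
  Fchain_coef (k + (size a)%:Z) j r * Fchain_coef k (j - count id r) a.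
Proof.
elim: a k => [|b a IH] k /=; first by rewrite addr0 mulr1.
by rewrite IH count_cat -subnDA addnC -mulrA -addrA -PoszD add1n.
Qed.

Lemma Fchain_coef_swap k j r :
  - q * Fchain_coef k j [:: false, true & r] + Fchain_coef k j [:: true, false & r] = 0.
Proof.
rewrite /= add1n add0n subnS; move: (Fchain_coef (k + 1 + 1) j r) => C.
case: (j - count id r)%N => [|d] /=; first by rewrite qint0 !(mulr0, mul0r) addr0.
qsimpl; qfield.
Qed.

Lemma eps_i_coord_sum n i (x : vec n) (u : (n - 2).-tuple bool) :
  (eps_i q i x) u = \sum_w
     (if u == del_pair i w then epsc q (nth false w i.-1) (nth false w i) else 0) *: x w.
Proof.
rewrite sum_ffunE; apply: eq_bigr => w _; rewrite sum_ffunE.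
under eq_bigr do rewrite !ffunE scalerA mulrC -scalerA.
case: ifP => _; last by rewrite scale0r; apply: big1 => j _; rewrite !scaler0.
by rewrite -scaler_sumr -poly_def coefK.
Qed.

Section Contraction.
Variables (n p : nat).
Hypothesis pn : (p.+2 <= n)%N.

Lemma eps_i_coord (x : vec n) (u : (n - 2).-tuple bool) :
  (eps_i q p.+1 x) u =
  - q *: x (ins_pair p.+1 u [:: false; true]) + x (ins_pair p.+1 u [:: true; false]).
Proof.
have epsw w : (if u == del_pair p.+1 w then epsc q (nth false w p) (nth false w p.+1) else 0)
    = (if w == ins_pair p.+1 u [:: false; true] then - q else 0)
      + (if w == ins_pair p.+1 u [:: true; false] then 1 else 0).
  rewrite {4 5}(ins_del_pair pn w) !(eq_ins_pair pn) [u == _]eq_sym.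
  by case: eqP => _; case: (nth false w p); case: (nth false w p.+1); rewrite /= ?addr0 ?add0r.
rewrite eps_i_coord_sum; under eq_bigr do rewrite epsw scalerDl.
by rewrite big_split /= !sum_scale_pred1 scale1r.
Qed.

Lemma eps_i_Fchain k (z : vec 0) : eps_i q p.+1 (Fchain q Q n k z) = 0.
Proof.
move: z; apply: (eq_linear_bvec (f := @eps_i K q n p.+1 \o @Fchain K q Q n k) (g := \0)).
move=> j w /=; rewrite (tuple0 w); apply/ffunP => u.
rewrite eps_i_coord !Fchain_coord !(val_ins_pair2 pn) ffunE !count_cat /= !Fchain_coef_cat.
by rewrite scalerA -scalerDl mulrA -mulrDl Fchain_coef_swap mul0r scale0r.
Qed.

End Contraction.

Hypothesis qmu_neq0 : forall j : nat, qmu q Q j.+1%:Z != 0.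

Lemma qmu_rising0 n : qmu_rising n 0 = \prod_(1 <= j < n.+1) qmu q Q j%:Z.
Proof. by apply: eq_bigr => j _; rewrite add0r. Qed.

Lemma qmu_rising0_neq0 n : qmu_rising n 0 != 0.
Proof.
rewrite /qmu_rising big_nat_cond.
elim/big_rec: _ => [|[|j] x /andP [/andP [j1 _] _] x0] //; first exact: oner_neq0.
by rewrite mulf_neq0 // add0r qmu_neq0.
Qed.

Lemma PmuE n (x : vec n) :
  Pmu q Q x = (qmu_rising n 0)^-1 *: Fchain q Q n 0 (Echain q 0 x).
Proof. by rewrite /Pmu Gchain_Fchain_Echain qmu_rising0. Qed.

Lemma Pmu_module_endo n : is_module_endo q Q 0 (@Pmu K q Q n).
Proof.
rewrite /Pmu; split=> x; rewrite linearZ /=; congr (_ *: _).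
- exact: (Gchain_intertwine (A := fun k n => @actK K q Q k n) Emap_actK Fmap_actK).
- exact: (Gchain_intertwine (A := fun k n => @actKi K q Q k n) Emap_actKi Fmap_actKi).
- exact: (Gchain_intertwine (A := fun k n => @actE K q k n) Emap_actE Fmap_actE).
- exact: (Gchain_intertwine (A := fun k n => @actF K q Q k n) Emap_actF Fmap_actF).
Qed.

Lemma Pmu_idem n (x : vec n) : Pmu q Q (Pmu q Q x) = Pmu q Q x.
Proof.
rewrite PmuE (PmuE x) [Echain _ _ _]linearZ /= Echain_Fchain scalerA.
by rewrite mulVf ?qmu_rising0_neq0 // scale1r.
Qed.

Lemma eps_i_Pmu n i (x : vec n) : (1 <= i <= n - 1)%N -> eps_i q i (Pmu q Q x) = 0.
Proof.
case: i => [|p] //= pn; rewrite PmuE linearZ /= eps_i_Fchain ?scaler0 //; lia.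
Qed.

Lemma Pmu_eta_i n i (y : vec (n - 2)) : (2 <= n)%N -> Pmu q Q (eta_i q i y) = 0.
Proof. by move=> n2; rewrite PmuE Echain_eta_i // linear0 scaler0. Qed.

Theorem Pmu_projector n :
  let P := Pmu q Q (n := n) in
  [/\ is_module_endo q Q 0 P,
      forall x : vec n, P (P x) = P x &
      (2 <= n)%N ->
      forall i : nat, (1 <= i <= n - 1)%N ->
        (forall x : vec n, eps_i q i (P x) = 0) /\
        (forall y : vec (n - 2), P (eta_i q i y) = 0)].
Proof.
split=> [||n2 i i_n]; first exact: Pmu_module_endo.
  exact: Pmu_idem.
by split=> [x | y]; [exact: eps_i_Pmu | exact: Pmu_eta_i].
Qed.

End Projector.

Lemma tofrac_neq0_eval (p : {mpoly Cfield[2]}) (v : 'I_2 -> Cfield) :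
  p.@[v] != 0 -> (tofrac p : Kfield) != 0.
Proof. by move=> h; rewrite tofrac_eq0; apply: contra h => /eqP ->; rewrite meval0. Qed.

Lemma qK_neq0 : qK != 0.
Proof. by apply: (@tofrac_neq0_eval _ (fun _ => 1)); rewrite mevalXU oner_neq0. Qed.

Lemma qmuK_neq0 : qmuK != 0.
Proof. by apply: (@tofrac_neq0_eval _ (fun _ => 1)); rewrite mevalXU oner_neq0. Qed.

Lemma tofrac_sqr_sub1_neq0 (p : {mpoly Cfield[2]}) : p.@[fun _ => 0] = 0 ->
  (tofrac p : Kfield) * tofrac p - 1 != 0.
Proof.
move=> p0; have -> : (tofrac p : Kfield) * tofrac p - 1 = tofrac (p * p - 1).
  by rewrite rmorphB rmorphM rmorph1.
apply: (@tofrac_neq0_eval _ (fun _ => 0)).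
by rewrite mevalB mevalM meval1 p0 mul0r sub0r oppr_eq0 oner_neq0.
Qed.

Lemma sub_inv_neq0 (F : fieldType) (a : F) : a != 0 -> a * a - 1 != 0 -> a - a^-1 != 0.
Proof.
move=> a0; apply: contraNneq => e.
by rewrite -[1](mulfV a0) -mulrBr e mulr0.
Qed.

Lemma qK_sqr_sub1_neq0 : qK * qK - 1 != 0.
Proof. by apply: tofrac_sqr_sub1_neq0; rewrite mevalXU. Qed.

Lemma qmu_Kfield_neq0 (j : nat) : qmu qK qmuK j.+1%:Z != 0.
Proof.
rewrite /qmu; apply: mulf_neq0; last first.
  by rewrite invr_eq0; apply: sub_inv_neq0; [exact: qK_neq0 | exact: qK_sqr_sub1_neq0].
apply: sub_inv_neq0.
  by apply: mulf_neq0; [exact: qmuK_neq0 | exact: expfz_neq0 qK_neq0].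
have -> : qmuK * qK ^ j.+1%:Z = tofrac ('X_1 * 'X_0 ^+ j.+1 : {mpoly Cfield[2]}).
  by rewrite rmorphM rmorphXn exprnP.
by apply: tofrac_sqr_sub1_neq0; rewrite mevalM mevalXU mul0r.
Qed.

Theorem mainTheorem5 (n : nat) (hn : (1 <= n)%N) :
  let P := Pmu qK qmuK (n := n) in
  [/\ is_module_endo qK qmuK 0 P,
      forall x : vec Kfield n, P (P x) = P x &
      (2 <= n)%N ->
      forall i : nat, (1 <= i <= n - 1)%N ->
        (forall x : vec Kfield n, eps_i qK i (P x) = 0) /\
        (forall y : vec Kfield (n - 2), P (eta_i qK i y) = 0)].
Proof.
exact: Pmu_projector qK_neq0 qmuK_neq0 qK_sqr_sub1_neq0 qmu_Kfield_neq0 n.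
Qed.
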